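(* Let $n\ge k\ge 3$ be integers. Then \[ \mathsf{opt}_{\operatorname{bandit}}^{\operatorname{det}}(n,k)\ge \left(\frac{k}{2}-1\right)\ln(n/k). \]
   Context: Prediction with expert advice in the realizable case: $\mathcal{Y}=\{1,\dots,k\}$, $\mathcal{X}=[k]^n$, experts $h_i(x)=x_i$, $i=1,\dots,n$. $\mathcal{P}_0$ is the set of finite sequences of examples in $\mathcal{X}\times\mathcal{Y}$ consistent with some $h_i$. Bandit feedback: each round the adversary presents $x_t$, a deterministic learner predicts $\hat y_t$ as a function of past observations and $x_t$, and learns only whether $\hat y_t$ equals the true label $y_t$. $\mathsf{opt}_{\operatorname{bandit}}^{\operatorname{det}}(n,k)$ is the infimum over deterministic learners of the supremum over $S\in\mathcal{P}_0$ of the number of mistakes ($\hat y_t\ne y_t$). *)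

From mathcomp Require Import all_boot all_order all_algebra.
From mathcomp Require Import all_classical all_reals all_analysis.
Set Implicit Arguments. Unset Strict Implicit. Unset Printing Implicit Defensive.
Import Order.TTheory GRing.Theory Num.Theory.

(* Instance space X = [k]^n, labels Y = [k] = 'I_k (labels 1..k encoded as 0..k-1). *)
Definition instance (n k : nat) := {ffun 'I_n -> 'I_k}.

Definition expert (n k : nat) (i : 'I_n) (x : instance n k) : 'I_k := x i.

Definition realizable (n k : nat) (S : seq (instance n k * 'I_k)) : Prop :=
  exists i : 'I_n, forall p, p \in S -> expert i p.1 = p.2.

(* Bandit observation at a past round: the instance x_s, the learner's own
   prediction yhat_s, and the feedback bit [yhat_s == y_s]. *)
Definition observation (n k : nat) := (instance n k * 'I_k * bool)%type.

Definition det_learner (n k : nat) := seq (observation n k) -> instance n k -> 'I_k.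

Fixpoint mistakes_from (n k : nat) (L : det_learner n k) (h : seq (observation n k))
  (S : seq (instance n k * 'I_k)) : nat :=
  match S with
  | [::] => 0
  | (x, y) :: S' =>
      let yh := L h x in
      (yh != y) + mistakes_from L (rcons h (x, yh, yh == y)) S'
  end.

Definition mistakes (n k : nat) (L : det_learner n k) S := mistakes_from L [::] S.

Local Open Scope classical_set_scope.
Local Open Scope ereal_scope.

Definition opt_bandit_det (R : realType) (n k : nat) : \bar R :=
  ereal_inf [set ereal_sup [set ((mistakes L S)%:R)%:E | S in realizable (n:=n) (k:=k)]
            | L in [set: det_learner n k]].

(* The adversary keeps the set V of experts consistent with the rounds so far.
   In each round it shows an instance that splits V into k classes of size at
   most ceil(|V|/k), and whatever the learner predicts, it declares the
   prediction wrong and keeps the experts outside the predicted class. The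
   invariant k^t <= |V| (k-2)^(t-1) lets it force t mistakes from V, and
   s <= (k/2 - 1) ln(n/k) makes the invariant hold for V = [n] and t = s+1,
   via ln(k/(k-2)) <= 2/(k-2). *)
From mathcomp Require Import all_boot all_order all_algebra.
From mathcomp Require Import all_classical all_reals all_analysis.
From mathcomp Require Import zify ring lra.
Set Implicit Arguments. Unset Strict Implicit. Unset Printing Implicit Defensive.
Import Order.TTheory GRing.Theory Num.Theory.

Lemma balanced_labelling (T : finType) (k : nat) (V : {set T}) : 0 < k ->
  exists x : {ffun T -> 'I_k},
    forall y, k * #|V :&: [set i | x i == y]| <= #|V| + k.-1.
Proof.
move=> k_gt0; set s := enum V; set q := (#|V| + k.-1) %/ k.
exists [ffun i => Ordinal (ltn_pmod (index i s) k_gt0)] => y.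
set A := V :&: _.
suff card_A : #|A| <= q.
  by rewrite mulnC (leq_trans _ (leq_divM _ k)) ?leq_mul2r ?card_A ?orbT.
have inA i : i \in A -> i \in s /\ index i s %% k = y.
  by rewrite !inE ffunE mem_enum => /andP[iV /eqP/(congr1 val)].
pose row i := index i s %/ k.
have row_inj : {in enum A &, injective row}.
  move=> a b /[!mem_enum] /inA[aV ay] /inA[bV b_y] eq_row.
  apply: (index_inj a aV bV).
  rewrite (divn_eq (index a s) k) (divn_eq (index b s) k).
  by rewrite -/(row a) -/(row b) eq_row ay b_y.
rewrite cardE -(size_map row) -(size_iota 0 q).
rewrite uniq_leq_size ?map_inj_in_uniq ?enum_uniq //.
move=> _ /mapP[i /[!mem_enum] /inA[iV _] ->]; rewrite mem_iota add0n /row.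
have : index i s < #|V| by rewrite cardE index_mem.
rewrite /q; nia.
Qed.

Lemma potential_step (k m m' t : nat) : 3 <= k ->
  k * m <= k * m' + (m + k.-1) ->
  k ^ t.+1 <= m * (k - 2) ^ t ->
  k ^ t <= m' * (k - 2) ^ t.-1.
Proof.
move=> k_ge3 shrink; have k_gt0 : 0 < k by lia.
case: t => [|t] /=.
  by rewrite expn1 !expn0 !muln1 => k_le_m; case: m' shrink => [|m'] //; nia.
rewrite !expnS => pot.
have k_le_m : k <= m.
  have k2_le_k : (k - 2) ^ t <= k ^ t.
    by elim: t {pot} => // t IH; rewrite !expnS leq_mul ?leq_subr.
  have : k * (k * k ^ t) <= k * (m * k ^ t).
    apply: (leq_trans pot).
    by rewrite [leqRHS]mulnCA leq_mul2l leq_mul ?leq_subr ?orbT.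
  by rewrite leq_pmul2l // leq_mul2r expn_eq0 eqn0Ngt k_gt0.
have shrink' : (k - 2) * m <= k * m' by clear pot; nia.
rewrite -(leq_pmul2l k_gt0) (leq_trans pot) //.
by rewrite mulnCA !mulnA leq_mul2r shrink' orbT.
Qed.

Definition consistent (n k : nat) (i : 'I_n) (S : seq (instance n k * 'I_k)) :=
  forall p, p \in S -> expert i p.1 = p.2.

Lemma adversary_forces_mistakes (n k : nat) (L : det_learner n k) (t : nat) :
  3 <= k -> forall h (V : {set 'I_n}), k ^ t <= #|V| * (k - 2) ^ t.-1 ->
  exists S, exists2 i, i \in V & consistent i S /\ mistakes_from L h S = t.
Proof.
move=> k_ge3; elim: t => [|t IH] h V pot.
  have [i iV] : exists i, i \in V.
    by apply/set0Pn; rewrite -card_gt0 -(muln1 #|V|) -(expn0 (k - 2)).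
  by exists [::]; exists i.
have [x balanced] := balanced_labelling V (ltnW (ltnW k_ge3)).
set yh := L h x; set V' := V :\: [set i | x i == yh].
have /(IH (rcons h (x, yh, false)))[S [i]] : k ^ t <= #|V'| * (k - 2) ^ t.-1.
  apply: (potential_step k_ge3) pot.
  by have := balanced yh; have := cardsID [set i | x i == yh] V; rewrite -/V'; lia.
rewrite !inE => /andP[x_i iV] [cons_S mistakes_S].
exists ((x, x i) :: S); exists i => //; split.
  by move=> p /[!inE] /orP[/eqP -> | /cons_S].
by rewrite /= -/yh eq_sym (negbTE x_i) mistakes_S.
Qed.

Local Open Scope ring_scope.

Lemma ln_le_subr1 (R : realType) (x : R) : 0 < x -> ln x <= x - 1.
Proof.
move=> x_gt0; have := @le_ln1Dx R (x - 1).
by rewrite [1 + _]addrC subrK; apply; lra.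
Qed.

Lemma expn_le_of_ln_bound (R : realType) (n k s : nat) : (3 <= k <= n)%N ->
  (s%:R : R) <= (k%:R / 2 - 1) * ln (n%:R / k%:R) ->
  (k ^ s.+1 <= n * (k - 2) ^ s)%N.
Proof.
case/andP=> k_ge3 k_le_n S_le.
rewrite -(ler_nat R) natrM !natrX natrB ?(leq_trans _ k_ge3) //.
set K : R := k%:R in S_le *; set N : R := n%:R in S_le *.
set S : R := s%:R in S_le.
have K_ge3 : 3 <= K by rewrite ler_nat.
have K_le_N : K <= N by rewrite ler_nat.
have K2_gt0 : 0 < K - 2 by lra.
have K_gt0 : 0 < K by lra.
have N_gt0 : 0 < N by lra.
have halfK1_gt0 : 0 < K / 2 - 1 by lra.
have ratio : ln K - ln (K - 2) <= 2 / (K - 2).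
  have -> : 2 / (K - 2) = K / (K - 2) - 1 by field; lra.
  by rewrite -ln_div ?posrE // ln_le_subr1 // divr_gt0.
have budget : S * (ln K - ln (K - 2)) <= ln N - ln K.
  apply: le_trans (ler_wpM2l (ler0n _ s) ratio) _.
  have -> : S * (2 / (K - 2)) = S / (K / 2 - 1) by field; lra.
  by rewrite -ln_div ?posrE // ler_pdivrMr // mulrC.
rewrite -ler_ln ?posrE ?mulr_gt0 ?exprn_gt0 // lnM ?posrE ?exprn_gt0 // !lnXn //.
move: budget; rewrite /S mulr_natl mulrnBl mulrSr; lra.
Qed.

Lemma opt_bandit_det_ge (R : realType) (n k t : nat) :
  (forall L : det_learner n k, exists2 S, realizable S & (t <= mistakes L S)%N) ->
  ((t%:R : R)%:E <= opt_bandit_det R n k)%E.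
Proof.
move=> forced; apply: le_ereal_inf_tmp => _ [L _ <-].
have [S S_realizable t_le] := forced L.
apply: le_ereal_sup_tmp; exists ((mistakes L S)%:R)%:E; first by exists S.
by rewrite lee_fin ler_nat.
Qed.

Theorem lemma4p5 (R : realType) (n k : nat) (hk : (3 <= k)%N) (hkn : (k <= n)%N) :
  (((k%:R / 2 - 1) * ln (n%:R / k%:R) : R)%:E <= opt_bandit_det R n k)%E.
Proof.
set c := (k%:R / 2 - 1) * ln (n%:R / k%:R) : R.
have c_ge0 : 0 <= c.
  have K_ge3 : (3 : R) <= k%:R by rewrite ler_nat.
  rewrite mulr_ge0 ?ln_ge0 ?ler_pdivlMr ?mul1r ?ler_nat //; lra.
have /andP[s_le_c c_lt_s1] := truncn_itv c_ge0.
set s := Num.truncn c in s_le_c c_lt_s1.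
have forced (L : det_learner n k) : exists2 S, realizable S & (s.+1 <= mistakes L S)%N.
  have [|S [i _ [cons_S mistakes_S]]] :=
    adversary_forces_mistakes L hk [::] (V := [set: 'I_n]) (t := s.+1).
    by rewrite cardsT card_ord (expn_le_of_ln_bound (R := R)) ?hk.
  by exists S; [exists i | rewrite /mistakes mistakes_S].
apply: le_trans _ (opt_bandit_det_ge R forced).
by rewrite lee_fin ltW.
Qed.
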